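(* Let $G$ be a graph. For each vertex $v$ let $\mathrm{BFS}(v)$ be a breadth-first search tree of $G$ rooted at $v$ and let $\ell(v)$ be the number of leaves of $\mathrm{BFS}(v)$. Then $\mathrm{gp}(G)\le 1+\min\{\ell(v) : v \text{ is a gp-vertex of } G\}$.
   Context: All graphs are finite, simple and connected. A geodesic is a shortest path. A set $S$ of vertices is a general position set of $G$ if no three vertices of $S$ lie on a common geodesic of $G$; $\mathrm{gp}(G)$ is the maximum cardinality of a general position set, and a general position set of that cardinality is a gp-set. A gp-vertex of $G$ is a vertex lying in at least one gp-set of $G$. *)

From mathcomp Require Import all_boot.
Set Implicit Arguments. Unset Strict Implicit. Unset Printing Implicit Defensive.

Section Graphs.
Variable T : finType.

Definition simple_connected_graph (e : rel T) : Prop :=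
  [/\ symmetric e, irreflexive e & forall x y : T, connect e x y].

Definition walkn (e : rel T) (x y : T) (n : nat) : bool :=
  [exists p : n.-tuple T, path e x p && (last x p == y)].

(* distance: least n with a walk of length n (all distances in a connected
   graph are < #|T|; the value #|T| is returned for unreachable pairs) *)
Definition dist (e : rel T) (x y : T) : nat :=
  find (walkn e x y) (iota 0 #|T|).

Definition geodesic (e : rel T) (g : seq T) : bool :=
  if g is x :: p then path e x p && (size p == dist e x (last x p))
  else false.

Definition gp_set (e : rel T) (S : {set T}) : Prop :=
  forall x y z : T, x \in S -> y \in S -> z \in S ->
    x != y -> y != z -> x != z ->
    ~ exists g : seq T, [/\ geodesic e g, x \in g, y \in g & z \in g].

Definition is_gp (e : rel T) (k : nat) : Prop :=
  (exists S : {set T}, gp_set e S /\ #|S| = k) /\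
  (forall S : {set T}, gp_set e S -> #|S| <= k).

Definition gp_vertex (e : rel T) (k : nat) (v : T) : Prop :=
  exists S : {set T}, [/\ gp_set e S, #|S| = k & v \in S].

Definition acyclic (t : rel T) : Prop :=
  forall c : seq T, 2 < size c -> uniq c -> ~~ cycle t c.

Definition spanning_tree (e t : rel T) : Prop :=
  [/\ subrel t e, symmetric t, irreflexive t,
      (forall x y : T, connect t x y) & acyclic t].

Definition bfs_tree (e : rel T) (v : T) (t : rel T) : Prop :=
  spanning_tree e t /\ forall u : T, dist t v u = dist e v u.

Definition leaves (t : rel T) : nat := #|[set u : T | #|[set w | t u w]| == 1]|.
End Graphs.

From mathcomp Require Import all_boot zify.
Set Implicit Arguments. Unset Strict Implicit. Unset Printing Implicit Defensive.

(* Let S be a gp-set containing v and t a BFS tree rooted at v.  Map each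
   u in S \ {v} to a deepest descendant of u in t; having no child, it is a
   leaf.  Since t preserves distances from v, the tree path from any vertex up
   to v is a geodesic of G.  So if two vertices u1, u2 of S \ {v} had the same
   leaf, then v, u1, u2 would lie on one geodesic; hence S \ {v} injects into
   the leaves of t. *)

Section Walks.
Variables (T : finType) (r : rel T).

Lemma walknP x y n :
  reflect (exists p, [/\ size p = n, path r x p & last x p = y]) (walkn r x y n).
Proof.
apply: (iffP existsP) => [[p /andP[hp /eqP hl]] | [p [hs hp hl]]].
  by exists (val p); rewrite size_tuple.
have hs' : size p == n by apply/eqP.
by exists (Tuple hs'); rewrite /= hp hl eqxx.
Qed.

Lemma walkn_connect x y n : walkn r x y n -> connect r x y.
Proof. by case/walknP=> p [_ hp <-]; apply/connectP; exists p. Qed.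

Lemma walkn0_eq x y : walkn r x y 0 -> x = y.
Proof. by case/walknP => -[|a p] [] //= _ _ ->. Qed.

Lemma walknSr x y n : walkn r x y n.+1 -> exists2 z, walkn r x z n & r z y.
Proof.
move=> /walknP [p [hs hp hl]].
case/lastP: p hs hp hl => [//|q z]; rewrite size_rcons rcons_path last_rcons.
move=> [hs] /andP [hq hz] <-; exists (last x q) => //.
by apply/walknP; exists q.
Qed.

Lemma walkn_rcons x z y n : walkn r x z n -> r z y -> walkn r x y n.+1.
Proof.
move=> /walknP [p [hs hp hl]] hr; apply/walknP; exists (rcons p y).
by rewrite size_rcons rcons_path last_rcons hs hp hl hr.
Qed.

Lemma dist_le_card x y : dist r x y <= #|T|.
Proof. by have := find_size (walkn r x y) (iota 0 #|T|); rewrite size_iota. Qed.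

Lemma dist_le_walkn x y n : walkn r x y n -> dist r x y <= n.
Proof.
move=> hw; have [hn|hn] := ltnP n #|T|; last exact: leq_trans (dist_le_card x y) hn.
rewrite leqNgt; apply/negP => /(before_find 0).
by rewrite nth_iota // add0n hw.
Qed.

Lemma walkn_dist x y : connect r x y -> walkn r x y (dist r x y).
Proof.
move=> /connectP [p hp ->]; case: (shortenP hp) => p' hp' hu _.
have hs : size p' < #|T|.
  by have := max_card (mem (x :: p')); rewrite (card_uniqP hu).
have hh : has (walkn r x (last x p')) (iota 0 #|T|).
  apply/hasP; exists (size p'); first by rewrite mem_iota.
  by apply/walknP; exists p'.
have := nth_find 0 hh; rewrite has_find size_iota in hh.
by rewrite nth_iota // add0n.
Qed.

Lemma dist_xx x : dist r x x = 0.
Proof.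
by apply/eqP; rewrite -leqn0; apply: dist_le_walkn; apply/walknP; exists [::].
Qed.

Lemma dist_eq0 x y : connect r x y -> dist r x y = 0 -> x = y.
Proof. by move=> /walkn_dist hw h0; rewrite h0 in hw; apply: walkn0_eq. Qed.

Lemma dist_pred x y : connect r x y -> x != y ->
  exists2 z, r z y & (dist r x z).+1 = dist r x y.
Proof.
move=> /walkn_dist; case hd: (dist r x y) => [|n] hw hxy.
  by rewrite (walkn0_eq hw) eqxx in hxy.
have [z hz hzy] := walknSr hw; exists z => //.
have := dist_le_walkn (walkn_rcons (walkn_dist (walkn_connect hz)) hzy).
by have := dist_le_walkn hz; rewrite hd; lia.
Qed.

Hypothesis r_sym : symmetric r.

Lemma walkn_sym x y n : walkn r x y n -> walkn r y x n.
Proof.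
move=> /walknP [p [hsz hp hl]]; apply/walknP.
exists (rev (belast x p)); split.
- by rewrite size_rev size_belast.
- by rewrite -hl rev_path (@eq_path _ _ r) // => a b; apply: r_sym.
- by case: p hsz hp hl => [|a p] //= _ _ _; rewrite rev_cons last_rcons.
Qed.

Lemma dist_sym x y : dist r x y = dist r y x.
Proof. by apply: eq_find => n; apply/idP/idP; apply: walkn_sym. Qed.

End Walks.

(* The default [x] is only reached when [x] is not connected to [v]. *)
Definition parent (T : finType) (t : rel T) (v x : T) : T :=
  if x == v then v
  else odflt x [pick y | t y x && ((dist t v y).+1 == dist t v x)].

Section RootPaths.
Variables (T : finType) (t : rel T) (v : T).
Hypothesis t_connected : forall x, connect t v x.

Local Notation P := (parent t v).
Local Notation d := (dist t v).

Lemma parent_root : P v = v.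
Proof. by rewrite /parent eqxx. Qed.

Lemma parent_spec x : x != v -> t (P x) x /\ (d (P x)).+1 = d x.
Proof.
move=> hx; rewrite /parent (negbTE hx).
case: pickP => [y /andP [h1 /eqP h2] //|none]; exfalso.
have hvx : v != x by rewrite eq_sym.
have [z hz hzd] := dist_pred (t_connected x) hvx.
by move: (none z); rewrite hz hzd eqxx.
Qed.

Lemma parent_edge x : x != v -> t (P x) x.
Proof. by case/parent_spec. Qed.

Lemma dist_parent x : x != v -> (d (P x)).+1 = d x.
Proof. by case/parent_spec. Qed.

Lemma dist_iter_parent k x : d (iter k P x) = d x - k.
Proof.
elim: k => [|k IH]; first by rewrite subn0.
rewrite iterS subnS -IH; have [->|hy] := eqVneq (iter k P x) v.
  by rewrite parent_root dist_xx.
by rewrite -(dist_parent hy).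
Qed.

Lemma iter_parent_dist x : iter (d x) P x = v.
Proof. by apply/esym/(dist_eq0 (t_connected _)); rewrite dist_iter_parent subnn. Qed.

Definition root_path x := traject P x (d x).+1.

Lemma root_path_root : root_path v = [:: v].
Proof. by rewrite /root_path dist_xx. Qed.

Lemma mem_root_path_root x : v \in root_path x.
Proof. by apply/trajectP; exists (d x); rewrite ?iter_parent_dist. Qed.

Lemma root_path_parent x : x != v -> root_path x = x :: root_path (P x).
Proof. by move=> hx; rewrite /root_path -(dist_parent hx). Qed.

Lemma uniq_traject_parent n x : n <= (d x).+1 -> uniq (traject P x n).
Proof.
elim: n x => [//|n IH] x hn; rewrite trajectS /= IH ?andbT.
- apply/trajectP => -[k hk]; rewrite -iterSr => hx.
  by have := dist_iter_parent k.+1 x; rewrite -hx; lia.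
- have [hxv|hx] := eqVneq x v; last by rewrite (dist_parent hx).
  by rewrite hxv parent_root in hn *; apply: ltnW.
Qed.

Hypothesis t_sym : symmetric t.

Lemma path_traject_parent n x : n <= d x -> path t x (traject P (P x) n).
Proof.
elim: n x => [//|n IH] x hn.
have hx : x != v by apply: contraTneq hn => ->; rewrite dist_xx.
rewrite trajectS /= t_sym parent_edge //=; apply: IH.
by rewrite -ltnS dist_parent.
Qed.

Lemma cycle_parent_paths x w i j :
  t x w -> i <= d x -> j <= d w -> iter i P x = iter j P w ->
  cycle t (traject P x i.+1 ++ rev (traject P w j)).
Proof.
move=> hxw hi hj hij.
rewrite trajectS /= rcons_cat cat_path last_traject path_traject_parent //= hij.
have := rev_path t x (rcons (traject P w j) (iter j P w)).
rewrite last_rcons belast_rcons rev_cons => ->.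
rewrite -trajectSr trajectS (@eq_path _ _ t) => [|a b]; last exact: t_sym.
by rewrite /= hxw path_traject_parent.
Qed.

Hypotheses (t_irr : irreflexive t) (t_acyclic : acyclic t).

(* Otherwise the root paths of [x] and [w], up to their first common vertex,
   close up with the edge [x w] into a cycle. *)
Lemma tree_edge_parent x w : t x w -> w = P x \/ x = P w.
Proof.
move=> hxw; have [|hw] := eqVneq w (P x); [by left | right].
apply/eqP/negP => hx.
have hex : exists j, iter j P w \in root_path x.
  by exists (d w); rewrite iter_parent_dist mem_root_path_root.
have [j /trajectP [i hi hij] hmin] := ex_minnP hex.
have hj : j <= d w by apply: hmin; rewrite iter_parent_dist mem_root_path_root.
have hsz : 2 < size (traject P x i.+1 ++ rev (traject P w j)).
  rewrite size_cat size_rev !size_traject.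
  case: i j hij {hi hj hmin} => [|[|i]] [|[|j]] //= hij; try lia.
  - by move: hxw; rewrite -hij t_irr.
  - by rewrite hij eqxx in hx.
  - by rewrite -hij eqxx in hw.
have hu : uniq (traject P x i.+1 ++ rev (traject P w j)).
  rewrite cat_uniq rev_uniq !uniq_traject_parent ?andbT //; last exact: leqW.
  apply/hasPn => y; rewrite mem_rev => /trajectP [k hk ->].
  apply/negP => /trajectP [k' hk' hkk'].
  suff : j <= k by rewrite leqNgt hk.
  apply: hmin; rewrite hkk'.
  by apply/trajectP; exists k'; first exact: leq_trans hi.
have := t_acyclic hsz hu.
by rewrite cycle_parent_paths // -ltnS.
Qed.

Lemma childless_neighbors x :
  x != v -> (forall c, P c != x) -> [set w | t x w] = [set P x].
Proof.
move=> hx hc; apply/setP => w; rewrite !inE; apply/idP/eqP => [hxw|->].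
  by case: (tree_edge_parent hxw) => // hxw'; move: (hc w); rewrite -hxw' eqxx.
by rewrite t_sym parent_edge.
Qed.

(* [y] is a descendant of [u] iff [u] lies on the root path of [y]. *)
Definition deepest_desc u := [arg max_(y > u in [set y | u \in root_path y]) d y].

Lemma deepest_descP u :
  u \in root_path (deepest_desc u) /\
  forall y, u \in root_path y -> d y <= d (deepest_desc u).
Proof.
rewrite /deepest_desc; case: arg_maxnP => [|y hy hmax].
  by rewrite inE mem_head.
by split => [|z hz]; [rewrite inE in hy | apply: hmax; rewrite inE].
Qed.

Lemma deepest_desc_neq_root u : u != v -> deepest_desc u != v.
Proof.
move=> hu; apply: contraNneq hu => hL.
by have [+ _] := deepest_descP u; rewrite hL root_path_root inE.
Qed.

Lemma parent_neq_deepest_desc u c : u != v -> P c != deepest_desc u.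
Proof.
move=> hu; apply/eqP => hc; have [hL hmax] := deepest_descP u.
have hcv : c != v.
  by apply: contra_neq (deepest_desc_neq_root hu) => hcv; rewrite -hc hcv parent_root.
have : d c <= d (deepest_desc u).
  by apply: hmax; rewrite root_path_parent // hc inE hL orbT.
by rewrite -(dist_parent hcv) hc ltnn.
Qed.

Lemma deepest_desc_leaf u : u != v -> #|[set w | t (deepest_desc u) w]| == 1.
Proof.
move=> hu; rewrite (childless_neighbors (deepest_desc_neq_root hu)) ?cards1 //.
by move=> c; apply: parent_neq_deepest_desc.
Qed.

Variable e : rel T.
Hypotheses (e_sym : symmetric e) (t_sub : subrel t e).

Lemma root_path_geodesic x : d x = dist e v x -> geodesic e (root_path x).
Proof.
move=> hd; rewrite /geodesic /root_path trajectS size_traject last_traject.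
rewrite iter_parent_dist (dist_sym e_sym x v) -hd eqxx andbT.
by apply: (sub_path t_sub); apply: path_traject_parent.
Qed.

End RootPaths.

Lemma gp_set_card_le_leaves (T : finType) (e t : rel T) (v : T) (S : {set T}) :
  symmetric e -> bfs_tree e v t -> gp_set e S -> v \in S -> #|S| <= 1 + leaves t.
Proof.
move=> e_sym [[t_sub t_sym t_irr t_conn t_acyclic] t_dist] hS hvS.
have inj : {in S :\ v &, injective (deepest_desc t v)}.
  move=> u1 u2 /setD1P [hu1 hu1S] /setD1P [hu2 hu2S] hL.
  have [//|hne] := eqVneq u1 u2; exfalso.
  have [hL1 _] := deepest_descP t v u1.
  have [hL2 _] := deepest_descP t v u2; rewrite -hL in hL2.
  apply: (hS v u1 u2) => //; rewrite 1?eq_sym //.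
  exists (root_path t v (deepest_desc t v u1)); split => //.
    exact: root_path_geodesic.
  exact: mem_root_path_root.
rewrite (cardsD1 v S) hvS leq_add2l -(card_in_imset inj).
apply/subset_leq_card/subsetP => _ /imsetP [u /setD1P [hu _] ->].
by rewrite inE deepest_desc_leaf.
Qed.

Theorem corollary3p4 (T : finType) (e : rel T) (BFS : T -> rel T) (k : nat) :
  simple_connected_graph e ->
  (forall v : T, bfs_tree e v (BFS v)) ->
  is_gp e k ->
  forall v : T, gp_vertex e k v -> k <= 1 + leaves (BFS v).
Proof.
move=> [e_sym _ _] hbfs _ v [S [hS <- hvS]].
exact: gp_set_card_le_leaves (hbfs v) hS hvS.
Qed.
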